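(* The algebra $\mathcal{O}_{nc}(\mathrm{GL}_2)$ has a $k$-basis consisting of the elements $\delta^{x_0}w_1\delta^{x_1}w_2\cdots w_n\delta^{x_n}$ ($n\ge0$) where $x_i\in\mathbb{Z}$, $x_i\ne0$ for $0<i<n$, each $w_i$ is a non-empty word in $a,b,c,d$ with non-decreasing row index (no letter from $\{c,d\}$ is followed by a letter from $\{a,b\}$), and whenever $x_i=-1$ with $0<i<n$, the letter immediately to the left of $\delta^{-1}$ and the letter immediately to the right of it have non-decreasing column index (i.e. the pair is not (letter of $\{b,d\}$, letter of $\{a,c\}$)).
   Context: $\mathcal{O}_{nc}(\mathrm{GL}_2)$ is the $k$-algebra generated by $a,b,c,d,\delta,\delta^{-1}$ subject to $ac=ca$, $bd=db$, $ad-cb=\delta=da-bc$, $\delta\delta^{-1}=1=\delta^{-1}\delta$, $a\delta^{-1}d-b\delta^{-1}c=1=d\delta^{-1}a-c\delta^{-1}b$, $b\delta^{-1}a=a\delta^{-1}b$, $c\delta^{-1}d=d\delta^{-1}c$. Row index: $a,b$ have row index 1 and $c,d$ row index 2; column index: $a,c$ have column index 1 and $b,d$ column index 2 (entries of the matrix $\begin{pmatrix}a&b\\c&d\end{pmatrix}$). *)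

From HB Require Import structures.
From mathcomp Require Import all_boot all_order all_algebra.
Set Implicit Arguments. Unset Strict Implicit. Unset Printing Implicit Defensive.
Import Order.TTheory GRing.Theory Num.Theory.
Local Open Scope ring_scope.

(* The six generators of the free algebra: a, b, c, d, delta, delta^{-1}. *)
Inductive gen := ga | gb | gc | gd | gdel | gdeli.

Definition nat_of_gen (g : gen) : nat :=
  match g with ga => 0 | gb => 1 | gc => 2 | gd => 3 | gdel => 4 | gdeli => 5 end%N.
Definition gen_of_nat (n : nat) : option gen :=
  match n with 0 => Some ga | 1 => Some gb | 2 => Some gc | 3 => Some gd
  | 4 => Some gdel | 5 => Some gdeli | _ => None end%N.
Lemma nat_of_genK : pcancel nat_of_gen gen_of_nat. Proof. by case. Qed.
HB.instance Definition _ := Equality.copy gen (pcan_type nat_of_genK).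

Definition word := seq gen.

(* Elements of the free algebra: formal finite sums  sum c_i * w_i. *)
Definition fpoly (k : fieldType) := seq (k * word).

Definition fcoef (k : fieldType) (p : fpoly k) (w : word) : k :=
  \sum_(t <- p) (if t.2 == w then t.1 else 0).

Definition feq (k : fieldType) (p q : fpoly k) : Prop :=
  forall w, fcoef p w = fcoef q w.

Definition fmon (k : fieldType) (w : word) : fpoly k := [:: (1, w)].
Definition fadd (k : fieldType) (p q : fpoly k) : fpoly k := p ++ q.
Definition fscale (k : fieldType) (c : k) (p : fpoly k) : fpoly k :=
  [seq (c * t.1, t.2) | t <- p].
Definition fsub (k : fieldType) (p q : fpoly k) : fpoly k := p ++ fscale (-1) q.
Definition fmul (k : fieldType) (p q : fpoly k) : fpoly k :=
  [seq (s.1 * t.1, s.2 ++ t.2) | s <- p, t <- q].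

(* The defining relations of O_nc(GL_2), as elements lhs - rhs. *)
Definition rels (k : fieldType) : seq (fpoly k) :=
  let m := @fmon k in
  [:: fsub (m [:: ga; gc]) (m [:: gc; ga]);
      fsub (m [:: gb; gd]) (m [:: gd; gb]);
      fsub (fsub (m [:: ga; gd]) (m [:: gc; gb])) (m [:: gdel]);
      fsub (fsub (m [:: gd; ga]) (m [:: gb; gc])) (m [:: gdel]);
      fsub (m [:: gdel; gdeli]) (m [::]);
      fsub (m [:: gdeli; gdel]) (m [::]);
      fsub (fsub (m [:: ga; gdeli; gd]) (m [:: gb; gdeli; gc])) (m [::]);
      fsub (fsub (m [:: gd; gdeli; ga]) (m [:: gc; gdeli; gb])) (m [::]);
      fsub (m [:: gb; gdeli; ga]) (m [:: ga; gdeli; gb]);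
      fsub (m [:: gc; gdeli; gd]) (m [:: gd; gdeli; gc]) ].

(* p lies in the two-sided ideal generated by rels: p is a finite k-linear
   combination of elements u * r * v with r a relation and u, v words. *)
Definition in_ideal (k : fieldType) (p : fpoly k) : Prop :=
  exists s : seq (k * word * fpoly k * word),
    (forall t, t \in s -> t.1.2 \in rels k) /\
    feq p (flatten [seq fscale t.1.1.1
                        (fmul (fmul (fmon k t.1.1.2) t.1.2) (fmon k t.2)) | t <- s]).

(* Row and column indices of the letters of the matrix (a b ; c d). *)
Definition is_abcd (g : gen) : bool :=
  match g with ga | gb | gc | gd => true | _ => false end.
Definition row_idx (g : gen) : nat :=
  match g with ga | gb => 1 | gc | gd => 2 | _ => 0 end%N.
Definition col_idx (g : gen) : nat :=
  match g with ga | gc => 1 | gb | gd => 2 | _ => 0 end%N.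

Definition good_word (w : word) : bool :=
  [&& w != [::], all is_abcd w & sorted leq (map row_idx w)].

Definition dpow (x : int) : word :=
  match x with Posz n => nseq n gdel | Negz n => nseq n.+1 gdeli end.

(* Conditions on the list [(w_1,x_1); ...; (w_n,x_n)]:
   each w_i is good; for 0 < i < n, x_i <> 0, and if x_i = -1 then
   col(last letter of w_i) <= col(first letter of w_{i+1}). *)
Fixpoint ok_tail (ps : seq (word * int)) : bool :=
  match ps with
  | [::] => true
  | (w, x) :: ps' =>
      [&& good_word w,
          (if ps' is (w', _) :: _ then
             (x != 0) && ((x == -1) ==> (col_idx (last ga w) <= col_idx (head ga w'))%N)
           else true)
        & ok_tail ps']
  end.

Definition build (x0 : int) (ps : seq (word * int)) : word :=
  dpow x0 ++ flatten [seq p.1 ++ dpow p.2 | p <- ps].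

Definition basis_word (w : word) : Prop :=
  exists (x0 : int) (ps : seq (word * int)), ok_tail ps /\ w = build x0 ps.

From HB Require Import structures.
From mathcomp Require Import all_boot all_order all_algebra.
From mathcomp Require Import zify ring.
Set Implicit Arguments. Unset Strict Implicit. Unset Printing Implicit Defensive.
Import Order.TTheory GRing.Theory Num.Theory.

(* Bergman's diamond lemma.  Orient the defining relations as the rewriting
   rules  ca -> ac,  db -> bd,  cb -> ad - δ,  da -> bc + δ,  δδ' -> 1,
   δ'δ -> 1,  bδ'c -> aδ'd - 1,  dδ'a -> cδ'b + 1,  bδ'a -> aδ'b,
   dδ'c -> cδ'd,  each replacing a word by smaller ones in the
   degree-lexicographic order; reducing shows that irreducible words span.
   Every ambiguity between two left-hand sides resolves (checked by
   computation against explicit certificates), so two rule instances with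
   the same leading word differ by instances with smaller leading words.  By
   induction on the leading word, a combination of rule instances vanishing
   on all reducible words vanishes, so irreducible words are independent.
   They are exactly the words of the statement: ca, db, cb, da forbid a
   row-2 letter before a row-1 letter, δδ' and δ'δ forbid mixed powers of δ,
   and bδ'c, dδ'a, bδ'a, dδ'c forbid a column descent across an isolated
   δ^{-1}. *)

(* wcode reads a word as a base-7 numeral with digits 1..6, so comparing
   codes compares words first by length, then lexicographically. *)
Definition gdigit (g : gen) : nat := (nat_of_gen g).+1.
Definition wcode (w : word) : nat := foldl (fun n g => n * 7 + gdigit g) 0 w.

Lemma wcode_cat u v : wcode (u ++ v) = wcode u * 7 ^ size v + wcode v.
Proof.
have acc n w : foldl (fun n g => n * 7 + gdigit g) n w = n * 7 ^ size w + wcode w.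
  elim: w n => [|g w IH] n /=; first by rewrite muln1 addn0.
  rewrite /wcode /= !IH expnS; ring.
by rewrite /wcode foldl_cat acc.
Qed.

Lemma wcode_bounds w : 7 ^ size w <= 6 * wcode w + 1 /\ wcode w < 7 ^ size w.
Proof.
elim/last_ind: w => [|w g [IH1 IH2]] //.
have /andP[] : 0 < gdigit g <= 6 by case: g.
rewrite -cats1 wcode_cat size_cat expnD expn1 [wcode [:: g]]/wcode /=.
move: (gdigit g) => dg *; split; nia.
Qed.

Lemma wcode_lt_size u v : size u < size v -> wcode u < wcode v.
Proof.
move=> lt_uv; have [_ hu] := wcode_bounds u; have [hv _] := wcode_bounds v.
have : 7 * 7 ^ size u <= 7 ^ size v by rewrite -expnS leq_exp2l.
lia.
Qed.

Lemma size_le_wcode u v : wcode u < wcode v -> size u <= size v.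
Proof. by move=> lt_uv; rewrite leqNgt; apply/negP => /wcode_lt_size; lia. Qed.

Lemma wcode_inj : injective wcode.
Proof.
have size_eq u v : wcode u = wcode v -> size u = size v.
  by move=> E; case: (ltngtP (size u) (size v)) => // /wcode_lt_size; lia.
elim=> [|g u IH] [|h v] E //; move: (size_eq _ _ E) => //= -[Es].
move: E; rewrite -(cat1s g) -(cat1s h) !wcode_cat Es /=.
have [_ hu] := wcode_bounds u; have [_ hv] := wcode_bounds v; rewrite Es in hu.
move=> E; have Eg : wcode [:: g] = wcode [:: h].
  have := congr1 (fun n => n %/ 7 ^ size v) E.
  by rewrite !divnMDl ?expn_gt0 // (divn_small hu) (divn_small hv) !addn0.
have Eu : wcode u = wcode v by move: E; rewrite Eg => /addnI.
by rewrite (IH v Eu); congr (_ :: _); move: Eg {E}; case: g; case: h.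
Qed.

Lemma wcode_ctx_lt L u v R :
  wcode u < wcode v -> wcode (L ++ u ++ R) < wcode (L ++ v ++ R).
Proof.
move=> lt_uv; have le_size := size_le_wcode lt_uv.
rewrite !wcode_cat !size_cat !expnD.
have : 7 ^ size u <= 7 ^ size v by rewrite leq_exp2l.
have : 0 < 7 ^ size R by rewrite expn_gt0.
move: (7 ^ size u) (7 ^ size v) (7 ^ size R) => a b c c_gt0 le_ab.
have : wcode L * a + wcode u < wcode L * b + wcode v by nia.
by rewrite -(ltn_pmul2r c_gt0); nia.
Qed.

Lemma cat_split (T : Type) (a b c d : seq T) : a ++ b = c ++ d -> size a <= size c ->
  c = a ++ drop (size a) c /\ b = drop (size a) c ++ d.
Proof.
elim: a c => [|x a IH] [|y c] //= [-> E] le_ac.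
by have [-> ->] := IH _ E le_ac; rewrite drop_size_cat.
Qed.

Local Open Scope ring_scope.

(* Integer combinations of words, on which the resolution certificates are
   checked by computation. *)
Definition ipoly := seq (int * word).

Definition icoef (p : ipoly) (w : word) : int :=
  foldr (fun t c => (if t.2 == w then t.1 else 0) + c) 0 p.
Definition ictx (A : word) (p : ipoly) (B : word) : ipoly :=
  [seq (t.1, A ++ t.2 ++ B) | t <- p].
Definition iscale (c : int) (p : ipoly) : ipoly := [seq (c * t.1, t.2) | t <- p].
Definition ipoly_eqb (p q : ipoly) : bool :=
  all (fun w => icoef p w == icoef q w) (map snd p ++ map snd q).

Lemma icoef_cat p q w : icoef (p ++ q) w = icoef p w + icoef q w.
Proof. by elim: p => [|t p IH] /=; rewrite ?add0r // IH addrA. Qed.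

Lemma icoef_scale c p w : icoef (iscale c p) w = c * icoef p w.
Proof. by elim: p => [|t p IH] /=; rewrite ?mulr0 // IH mulrDr; case: ifP; rewrite ?mulr0. Qed.

Lemma icoef_flatten (ps : seq ipoly) w : icoef (flatten ps) w = \sum_(p <- ps) icoef p w.
Proof. by elim: ps => [|p ps IH]; rewrite ?big_nil // big_cons icoef_cat IH. Qed.

Lemma icoef_eq0 p w : w \notin map snd p -> icoef p w = 0.
Proof.
elim: p => [|t p IH] //=; rewrite inE negb_or => /andP[ne_w /IH ->].
by rewrite eq_sym (negbTE ne_w) addr0.
Qed.

Lemma ipoly_eqbP p q : ipoly_eqb p q -> forall w, icoef p w = icoef q w.
Proof.
move=> /allP eq_pq w; have [/eq_pq/eqP //|] := boolP (w \in map snd p ++ map snd q).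
by rewrite mem_cat negb_or => /andP[p_w q_w]; rewrite !icoef_eq0.
Qed.

(* An instance (c, L, i, R) of a rule i stands for c * L (lhs_i - rhs_i) R. *)
Notation inst T := (T * word * nat * word)%type.

Section FreeAlgebra.
Variable k : fieldType.
Implicit Types (p q : fpoly k) (w A B : word).

Lemma fcoef_nil w : fcoef ([::] : fpoly k) w = 0.
Proof. by rewrite /fcoef big_nil. Qed.

Lemma fcoef_cons t p w : fcoef (t :: p) w = (if t.2 == w then t.1 else 0) + fcoef p w.
Proof. by rewrite /fcoef big_cons. Qed.

Lemma fcoef_cat p q w : fcoef (p ++ q) w = fcoef p w + fcoef q w.
Proof. by rewrite /fcoef big_cat. Qed.

Lemma fcoef_scale c p w : fcoef (fscale c p) w = c * fcoef p w.
Proof.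
rewrite /fcoef big_map mulr_sumr; apply: eq_bigr => t _ /=.
by case: ifP; rewrite ?mulr0.
Qed.

Lemma fcoef_flatten (ps : seq (fpoly k)) w :
  fcoef (flatten ps) w = \sum_(p <- ps) fcoef p w.
Proof. by elim: ps => [|p ps IH]; rewrite ?big_nil ?fcoef_nil // big_cons fcoef_cat IH. Qed.

Lemma fcoef_eq0 p w : (forall t, t \in p -> t.2 != w) -> fcoef p w = 0.
Proof. by move=> ne_w; rewrite /fcoef big_seq big1 // => t /ne_w /negbTE ->. Qed.

Lemma fcoef_uniq (p : fpoly k) t : uniq (map snd p) -> t \in p -> fcoef p t.2 = t.1.
Proof.
elim: p => [|x p IH] //= /andP[x_p uniq_p]; rewrite inE fcoef_cons.
case/orP => [/eqP ->|t_p].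
  rewrite eqxx fcoef_eq0 ?addr0 // => y y_p; apply: contraNneq x_p => <-.
  exact: map_f.
by rewrite IH // ifN ?add0r //; apply: contraNneq x_p => ->; apply: map_f.
Qed.

Definition ctx A p B : fpoly k := [seq (t.1, A ++ t.2 ++ B) | t <- p].

Definition unctx A B w : word := take (size w - size A - size B)%N (drop (size A) w).

Lemma unctxK A v B : unctx A B (A ++ v ++ B) = v.
Proof.
rewrite /unctx drop_size_cat // !size_cat.
by rewrite (_ : (_ - _ - _ = size v)%N) ?take_size_cat //; lia.
Qed.

Lemma fcoef_ctx A p B w :
  fcoef (ctx A p B) w = if w == A ++ unctx A B w ++ B then fcoef p (unctx A B w) else 0.
Proof.
rewrite /fcoef big_map; case: eqP => [Ew|NEw].
  apply: eq_bigr => t _ /=; rewrite {1}Ew.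
  have [->|ne_t] := eqVneq t.2 (unctx A B w); first by rewrite eqxx.
  by case: eqP => // /(congr1 (unctx A B)); rewrite !unctxK => /eqP; rewrite (negbTE ne_t).
rewrite big1 // => t _ /=; case: eqP => // Et.
by case: NEw; rewrite -Et unctxK.
Qed.

Lemma ctx_feq A B p q : feq p q -> feq (ctx A p B) (ctx A q B).
Proof. by move=> eq_pq w; rewrite !fcoef_ctx eq_pq. Qed.

Lemma ctx_cat A B p q : ctx A (p ++ q) B = ctx A p B ++ ctx A q B.
Proof. exact: map_cat. Qed.

Lemma ctx_scale A B c p : ctx A (fscale c p) B = fscale c (ctx A p B).
Proof. by rewrite /ctx /fscale -!map_comp. Qed.

Lemma ctx_ctx A B L R p : ctx A (ctx L p R) B = ctx (A ++ L) p (R ++ B).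
Proof. by rewrite /ctx -map_comp; apply: eq_map => t /=; rewrite !catA. Qed.

Lemma fcoef_fmul_mon L R p w :
  fcoef (fmul (fmul (fmon k L) p) (fmon k R)) w = fcoef (ctx L p R) w.
Proof.
rewrite /fmul /fmon /ctx /= !cats0.
by elim: p => [|t p IH] //=; rewrite !fcoef_cons IH mul1r mulr1 catA.
Qed.

Definition emb (p : ipoly) : fpoly k := [seq (t.1%:~R, t.2) | t <- p].

Lemma fcoef_emb (p : ipoly) w : fcoef (emb p) w = (icoef p w)%:~R.
Proof.
elim: p => [|t p IH]; first by rewrite fcoef_nil.
by rewrite /= fcoef_cons IH rmorphD /=; case: ifP.
Qed.

Lemma emb_ictx A B (p : ipoly) : emb (ictx A p B) = ctx A (emb p) B.
Proof. by rewrite /emb /ictx /ctx -!map_comp. Qed.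

Lemma fcoef_ctx_emb_opp L R (p : ipoly) w :
  fcoef (ctx L (emb [seq (- t.1, t.2) | t <- p]) R) w = - fcoef (ctx L (emb p) R) w.
Proof.
rewrite /ctx /emb -!map_comp /fcoef !big_map -sumrN; apply: eq_bigr => t _ /=.
by case: ifP; rewrite ?mulrNz ?oppr0.
Qed.

End FreeAlgebra.

Section Rewriting.
Variable rules : seq (word * ipoly).

Definition lhs i : word := (nth ([::], [::]) rules i).1.
Definition rhs i : ipoly := (nth ([::], [::]) rules i).2.
Definition irel i : ipoly := (1, lhs i) :: [seq (- t.1, t.2) | t <- rhs i].
Definition lead_word L i R : word := L ++ lhs i ++ R.
Definition inst_lead T (t : inst T) : word := lead_word t.1.1.2 t.1.2 t.2.
Definition reduced (w : word) : bool :=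
  ~~ has (fun i => infix (lhs i) w) (iota 0 (size rules)).
Definition icombo (C : seq (inst int)) : ipoly :=
  flatten [seq iscale t.1.1.1 (ictx t.1.1.2 (irel t.1.2) t.2) | t <- C].

Lemma reducedPn w :
  reflect (exists L i R, (i < size rules)%N /\ w = lead_word L i R) (~~ reduced w).
Proof.
rewrite negbK; apply: (iffP hasP) => [[i]|[L [i [R [lt_i ->]]]]].
  by rewrite mem_iota => /andP[_ lt_i] /infixP[L [R ->]]; exists L, i, R.
by exists i; rewrite ?mem_iota // infix_infix.
Qed.

Hypothesis rules_decreasing :
  all (fun r => all (fun u => wcode u < wcode r.1)%N (map snd r.2)) rules.

Lemma wcode_rhs_lt L i R u : (i < size rules)%N -> u \in map snd (rhs i) ->
  (wcode (L ++ u ++ R) < wcode (lead_word L i R))%N.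
Proof.
move=> lt_i u_rhs; apply: wcode_ctx_lt.
by move: rules_decreasing => /(all_nthP ([::], [::]))/(_ i lt_i)/allP; apply.
Qed.

Section Field.
Variable k : fieldType.
Implicit Types (C D : seq (inst k)) (w L R : word).

Definition relk i : fpoly k := emb k (irel i).
Definition term (t : inst k) : fpoly k := fscale t.1.1.1 (ctx t.1.1.2 (relk t.1.2) t.2).
Definition combo C : fpoly k := flatten (map term C).

Lemma fcoef_ctx_relk A i B w :
  fcoef (ctx A (relk i) B) w = (icoef (ictx A (irel i) B) w)%:~R.
Proof. by rewrite -emb_ictx fcoef_emb. Qed.

Lemma fcoef_combo C w : fcoef (combo C) w = \sum_(t <- C) fcoef (term t) w.
Proof. by rewrite fcoef_flatten big_map. Qed.

Lemma fcoef_combo_cat C D w : fcoef (combo (C ++ D)) w = fcoef (combo C) w + fcoef (combo D) w.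
Proof. by rewrite /combo map_cat flatten_cat fcoef_cat. Qed.

Lemma combo_cons t C : combo (t :: C) = term t ++ combo C.
Proof. by []. Qed.

Lemma fcoef_combo_cons t C w : fcoef (combo (t :: C)) w = fcoef (term t) w + fcoef (combo C) w.
Proof. exact: fcoef_cat. Qed.

Lemma fcoef_term c L i R w : fcoef (term (c, L, i, R)) w = c * fcoef (ctx L (relk i) R) w.
Proof. exact: fcoef_scale. Qed.

Lemma ctx_relkE L i R :
  ctx L (relk i) R = (1, lead_word L i R) :: ctx L (emb k [seq (- t.1, t.2) | t <- rhs i]) R.
Proof. by []. Qed.

Lemma fcoef_ctx_rhs_eq0 L i R w : (i < size rules)%N ->
  (wcode (lead_word L i R) <= wcode w)%N ->
  fcoef (ctx L (emb k [seq (- t.1, t.2) | t <- rhs i]) R) w = 0.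
Proof.
move=> lt_i le_w; apply: fcoef_eq0 => t /mapP[_ /mapP[_ /mapP[v v_rhs ->] ->] ->] /=.
apply/eqP => Ew; have := wcode_rhs_lt L R lt_i (map_f snd v_rhs).
by rewrite Ew; lia.
Qed.

Lemma fcoef_relk_lead L i R : (i < size rules)%N ->
  fcoef (ctx L (relk i) R) (lead_word L i R) = 1.
Proof. by move=> lt_i; rewrite ctx_relkE fcoef_cons eqxx fcoef_ctx_rhs_eq0 ?addr0. Qed.

Lemma fcoef_relk_above L i R w : (i < size rules)%N -> w != lead_word L i R ->
  (wcode (lead_word L i R) <= wcode w)%N -> fcoef (ctx L (relk i) R) w = 0.
Proof.
by move=> lt_i ne_w le_w; rewrite ctx_relkE fcoef_cons eq_sym (negbTE ne_w) add0r fcoef_ctx_rhs_eq0.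
Qed.

Definition below n C : Prop :=
  forall t, t \in C -> (t.1.2 < size rules)%N /\ (wcode (inst_lead t) < n)%N.

Lemma below_cat n C D : below n C -> below n D -> below n (C ++ D).
Proof. by move=> bC bD t; rewrite mem_cat => /orP[/bC|/bD]. Qed.

Lemma fcoef_combo_below n C w : below n C -> (n <= wcode w)%N -> fcoef (combo C) w = 0.
Proof.
move=> bC le_n; rewrite fcoef_combo big_seq big1 // => -[[[c L] i] R] /bC[/= lt_i lt_n].
rewrite fcoef_term fcoef_relk_above ?mulr0 //; last by rewrite /inst_lead /= in lt_n; lia.
by apply/eqP => Ew; rewrite /inst_lead /= -Ew in lt_n; lia.
Qed.

Definition normalizes (p : fpoly k) : Prop :=
  exists (s : fpoly k) C, (forall t, t \in s -> reduced t.2) /\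
    (forall t, t \in C -> (t.1.2 < size rules)%N) /\
    forall w, fcoef p w = fcoef s w + fcoef (combo C) w.

Lemma normalizes_cat p q : normalizes p -> normalizes q -> normalizes (p ++ q).
Proof.
move=> [s1 [C1 [s1_red [C1_ok E1]]]] [s2 [C2 [s2_red [C2_ok E2]]]].
exists (s1 ++ s2), (C1 ++ C2); split; last split.
- by move=> t; rewrite mem_cat => /orP[/s1_red|/s2_red].
- by move=> t; rewrite mem_cat => /orP[/C1_ok|/C2_ok].
- by move=> w; rewrite !fcoef_cat E1 E2 fcoef_combo_cat; ring.
Qed.

Lemma normalizes_seq (p : fpoly k) : (forall t, t \in p -> normalizes [:: t]) -> normalizes p.
Proof.
elim: p => [|t p IH] norm_p.
  by exists [::], [::]; do 2!split => //; move=> w; rewrite fcoef_nil addr0.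
rewrite -cat1s; apply: normalizes_cat; first by apply: norm_p; rewrite mem_head.
by apply: IH => x x_p; apply: norm_p; rewrite inE x_p orbT.
Qed.

Lemma normalizes_mon c u : normalizes [:: (c, u)].
Proof.
have [n lt_u] : exists n, (wcode u < n)%N by exists (wcode u).+1.
elim: n c u lt_u => // n IH c u lt_u.
have [red_u|/reducedPn[L [i [R [lt_i Eu]]]]] := boolP (reduced u).
  exists [:: (c, u)], [::]; split; first by move=> t; rewrite inE => /eqP ->.
  by split => // w; rewrite fcoef_nil addr0.
have [s [C [s_red [C_ok E]]]] : normalizes (fscale c (ctx L (emb k (rhs i)) R)).
  apply: normalizes_seq => _ /mapP[_ /mapP[_ /mapP[v v_rhs ->] ->] ->] /=.
  apply/IH/(leq_trans (wcode_rhs_lt L R lt_i (map_f snd v_rhs))).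
  by rewrite -Eu -ltnS.
exists s, ((c, L, i, R) :: C); split => //; split.
  by move=> t; rewrite inE => /orP[/eqP -> //|/C_ok].
move=> w; rewrite -[fcoef s w](addrK (fcoef (combo C) w)) -E fcoef_scale.
rewrite fcoef_combo_cons fcoef_term ctx_relkE !fcoef_cons fcoef_nil fcoef_ctx_emb_opp -Eu /=.
by case: eqP => _; ring.
Qed.

Definition embC (C : seq (inst int)) : seq (inst k) :=
  [seq (t.1.1.1%:~R, t.1.1.2, t.1.2, t.2) | t <- C].
Definition ctxC A B C : seq (inst k) := [seq (t.1.1.1, A ++ t.1.1.2, t.1.2, t.2 ++ B) | t <- C].
Definition scaleC c C : seq (inst k) := [seq (c * t.1.1.1, t.1.1.2, t.1.2, t.2) | t <- C].

Lemma fcoef_combo_emb (C : seq (inst int)) w : fcoef (combo (embC C)) w = (icoef (icombo C) w)%:~R.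
Proof.
rewrite fcoef_combo /icombo icoef_flatten !big_map rmorph_sum.
apply: eq_bigr => -[[[c L] i] R] _.
by rewrite fcoef_term fcoef_ctx_relk icoef_scale rmorphM.
Qed.

Lemma fcoef_combo_ctx A B C w : fcoef (combo (ctxC A B C)) w = fcoef (ctx A (combo C) B) w.
Proof.
elim: C => [|[[[c L] i] R] C IH] //.
rewrite /ctxC map_cons -/(ctxC A B C) !combo_cons ctx_cat !fcoef_cat IH.
by rewrite /term ctx_scale ctx_ctx.
Qed.

Lemma fcoef_combo_scale c C w : fcoef (combo (scaleC c C)) w = c * fcoef (combo C) w.
Proof.
rewrite !fcoef_combo big_map mulr_sumr; apply: eq_bigr => -[[[c' L] i] R] _.
by rewrite !fcoef_term mulrA.
Qed.

Lemma below_scale n c C : below n C -> below n (scaleC c C).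
Proof. by move=> bC t /mapP[t0 /bC ? ->]. Qed.

End Field.

Section Disjoint.
Variables (k : fieldType) (L Y R w : word).

(* The coefficient of w in L P Y Q R, bilinear in P and Q. *)
Definition sandwich (P Q : fpoly k) : k :=
  \sum_(x <- P) \sum_(y <- Q) x.1 * y.1 * (L ++ x.2 ++ Y ++ y.2 ++ R == w)%:R.

Lemma sandwich_consl a v P Q : sandwich ((a, v) :: P) Q = a * sandwich [:: (1, v)] Q + sandwich P Q.
Proof.
rewrite /sandwich !big_cons big_nil addr0 mulr_sumr; congr (_ + _).
by apply: eq_bigr => y _; rewrite mul1r mulrA.
Qed.

Lemma sandwich_consr a v P Q : sandwich P ((a, v) :: Q) = a * sandwich P [:: (1, v)] + sandwich P Q.
Proof.
rewrite /sandwich mulr_sumr -big_split; apply: eq_bigr => x _.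
by rewrite !big_cons big_nil addr0 /=; congr (_ + _); ring.
Qed.

Lemma sandwich_ctxl v Q : fcoef (ctx (L ++ v ++ Y) Q R) w = sandwich [:: (1, v)] Q.
Proof.
rewrite /fcoef /sandwich big_map big_cons big_nil addr0; apply: eq_bigr => y _ /=.
by rewrite mul1r -!catA; case: eqP; rewrite ?mulr1 ?mulr0.
Qed.

Lemma sandwich_ctxr P v : fcoef (ctx L P (Y ++ v ++ R)) w = sandwich P [:: (1, v)].
Proof.
rewrite /fcoef /sandwich big_map; apply: eq_bigr => x _.
by rewrite big_cons big_nil addr0 /= mulr1; case: eqP; rewrite ?mulr1 ?mulr0.
Qed.

Lemma sandwich_embl (f : ipoly) Q :
  sandwich (emb k f) Q = \sum_(t <- f) t.1%:~R * sandwich [:: (1, t.2)] Q.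
Proof.
elim: f => [|[c v] f IH]; first by rewrite /sandwich !big_nil.
by rewrite [emb k _]/= sandwich_consl IH big_cons.
Qed.

Lemma sandwich_embr P (f : ipoly) :
  sandwich P (emb k f) = \sum_(t <- f) t.1%:~R * sandwich P [:: (1, t.2)].
Proof.
elim: f => [|[c v] f IH].
  by rewrite big_nil /sandwich big1 // => x _; rewrite big_nil.
by rewrite [emb k _]/= sandwich_consr IH big_cons.
Qed.

Lemma sandwich_emb_oppl (f : ipoly) Q :
  sandwich (emb k [seq (- t.1, t.2) | t <- f]) Q = - sandwich (emb k f) Q.
Proof.
rewrite !sandwich_embl big_map -sumrN; apply: eq_bigr => t _ /=.
by rewrite mulrNz mulNr.
Qed.

Lemma sandwich_emb_oppr P (f : ipoly) :
  sandwich P (emb k [seq (- t.1, t.2) | t <- f]) = - sandwich P (emb k f).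
Proof.
rewrite !sandwich_embr big_map -sumrN; apply: eq_bigr => t _ /=.
by rewrite mulrNz mulNr.
Qed.

End Disjoint.

Definition disjoint_cert (k : fieldType) (L Y R : word) i j : seq (inst k) :=
  [seq (t.1%:~R, L, i, Y ++ t.2 ++ R) | t <- rhs j] ++
  [seq (- t.1%:~R, L ++ t.2 ++ Y, j, R) | t <- rhs i].

(* Non-overlapping redexes commute:
   (l_i - r_i) Y l_j = l_i Y (l_j - r_j) + (l_i - r_i) Y r_j - r_i Y (l_j - r_j). *)
Lemma disjoint_resolution (k : fieldType) L Y R i j w :
  fcoef (ctx L (relk k i) (Y ++ lhs j ++ R)) w =
  fcoef (ctx (L ++ lhs i ++ Y) (relk k j) R) w + fcoef (combo (disjoint_cert k L Y R i j)) w.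
Proof.
rewrite fcoef_combo_cat !fcoef_combo !big_map sandwich_ctxr sandwich_ctxl.
have -> : \sum_(t <- rhs j) fcoef (term (t.1%:~R, L, i, Y ++ t.2 ++ R)) w =
          sandwich L Y R w (relk k i) (emb k (rhs j)).
  by rewrite sandwich_embr; apply: eq_bigr => t _; rewrite fcoef_term sandwich_ctxr.
have -> : \sum_(t <- rhs i) fcoef (term (- t.1%:~R, L ++ t.2 ++ Y, j, R)) w =
          - sandwich L Y R w (emb k (rhs i)) (relk k j).
  by rewrite sandwich_embl -sumrN; apply: eq_bigr => t _; rewrite fcoef_term sandwich_ctxl mulNr.
set B := sandwich L Y R w.
have relkl Q : B (relk k i) Q = B [:: (1, lhs i)] Q - B (emb k (rhs i)) Q.
  by rewrite /B [relk k i]/= sandwich_consl sandwich_emb_oppl mul1r.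
have relkr P : B P (relk k j) = B P [:: (1, lhs j)] - B P (emb k (rhs j)).
  by rewrite /B [relk k j]/= sandwich_consr sandwich_emb_oppr mul1r.
rewrite relkl (relkl (emb k (rhs j))) relkr (relkr (emb k (rhs i))); ring.
Qed.

Section Ambiguities.
(* cert i j p resolves the overlap where lhs j starts at position p of lhs i:
   writing lhs i = X Z and lhs j = Z V, it expresses
   irel i V - X irel j as a combination of instances below X Z V. *)
Variable cert : nat -> nat -> nat -> seq (inst int).

Definition overlap_resolved i j p : bool :=
  let X := take p (lhs i) in let Z := drop p (lhs i) in
  let V := drop (size Z) (lhs j) in
  all (fun c => (c.1.2 < size rules)%N && (wcode (inst_lead c) < wcode (lhs i ++ V))%N)
      (cert i j p) &&
  ipoly_eqb (ictx [::] (irel i) V ++ iscale (-1) (ictx X (irel j) [::])) (icombo (cert i j p)).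

(* No left-hand side contains another one. *)
Definition ambiguity_resolved i j p : bool :=
  let Z := drop p (lhs i) in
  if (size (lhs j) <= size Z)%N then prefix (lhs j) Z ==> (p == 0)%N && (i == j)
  else prefix Z (lhs j) ==> overlap_resolved i j p.

Definition ambiguities_resolved : bool :=
  all (fun i => all (fun j => all (ambiguity_resolved i j) (iota 0 (size (lhs i))))
                    (iota 0 (size rules))) (iota 0 (size rules)).

Hypothesis resolved : ambiguities_resolved.

Lemma ambiguity_resolvedP i j p : (i < size rules)%N -> (j < size rules)%N ->
  (p < size (lhs i))%N -> ambiguity_resolved i j p.
Proof.
move=> lt_i lt_j lt_p; move/allP: resolved => /(_ i); rewrite mem_iota => /(_ lt_i).
by move/allP => /(_ j); rewrite mem_iota => /(_ lt_j) /allP; apply; rewrite mem_iota.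
Qed.

Section Field.
Variable k : fieldType.
Implicit Types (C D : seq (inst k)) (w L R : word).

Lemma overlap_resolution i j p A B w : overlap_resolved i j p ->
  let X := take p (lhs i) in let Z := drop p (lhs i) in
  let V := drop (size Z) (lhs j) in
  fcoef (ctx A (relk k i) (V ++ B)) w =
  fcoef (ctx (A ++ X) (relk k j) B) w + fcoef (combo (ctxC A B (embC k (cert i j p)))) w.
Proof.
move=> /andP[_ /ipoly_eqbP eq_cert] X Z V.
have E : feq (ctx [::] (relk k i) V ++ fscale (-1) (ctx X (relk k j) [::]))
             (combo (embC k (cert i j p))).
  move=> w'; rewrite fcoef_combo_emb -eq_cert icoef_cat icoef_scale intrD intrM.
  by rewrite fcoef_cat fcoef_scale !fcoef_ctx_relk.
rewrite fcoef_combo_ctx -(ctx_feq A B E) ctx_cat ctx_scale fcoef_cat fcoef_scale !ctx_ctx.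
by rewrite cats0 cat0s; ring.
Qed.

Lemma below_disjoint_cert L Y R i j : (i < size rules)%N -> (j < size rules)%N ->
  below (wcode (L ++ lhs i ++ Y ++ lhs j ++ R)) (disjoint_cert k L Y R i j).
Proof.
move=> lt_i lt_j t; rewrite mem_cat => /orP[] /mapP[u u_rhs ->]; split => //.
  have := wcode_rhs_lt (L ++ lhs i ++ Y) R lt_j (map_f snd u_rhs).
  by rewrite /inst_lead /lead_word /= -!catA.
have := wcode_rhs_lt L (Y ++ lhs j ++ R) lt_i (map_f snd u_rhs).
by rewrite /inst_lead /lead_word /= -!catA.
Qed.

Lemma below_overlap_cert i j p L R : overlap_resolved i j p ->
  below (wcode (L ++ lhs i ++ drop (size (drop p (lhs i))) (lhs j) ++ R))
        (ctxC L R (embC k (cert i j p))).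
Proof.
move=> /andP[/allP ok_cert _] t /mapP[_ /mapP[c c_cert ->] ->] /=.
have /andP[lt_c lt_lead] := ok_cert c c_cert; split => //.
by have := wcode_ctx_lt L R lt_lead; rewrite /inst_lead /lead_word /= -!catA.
Qed.

Lemma lead_word_eq_resolution_le L i R L' j R' :
  (i < size rules)%N -> (j < size rules)%N ->
  lead_word L i R = lead_word L' j R' -> (size L <= size L')%N ->
  exists D, below (wcode (lead_word L i R)) D /\
    forall w, fcoef (ctx L (relk k i) R) w = fcoef (ctx L' (relk k j) R') w + fcoef (combo D) w.
Proof.
move=> lt_i lt_j E le_L; have [EL' E2] := cat_split E le_L.
set X := drop (size L) L' in EL' E2.
have [le_X|lt_X] := leqP (size (lhs i)) (size X).
  have [EX ER] := cat_split E2 le_X; set Y := drop (size (lhs i)) X in EX ER.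
  exists (disjoint_cert k L Y R' i j); split.
    by rewrite /lead_word ER; apply: below_disjoint_cert.
  by move=> w; rewrite ER disjoint_resolution EL' EX.
set p := size X; have [EX ER] := cat_split (esym E2) (ltnW lt_X).
rewrite -/p in EX ER; set Z := drop p (lhs i) in EX ER.
have := ambiguity_resolvedP lt_i lt_j lt_X; rewrite /ambiguity_resolved -/Z.
have [le_Z|lt_Z] := leqP (size (lhs j)) (size Z).
  have [EZ _] := cat_split ER le_Z.
  have pre : prefix (lhs j) Z by apply/prefixP; exists (drop (size (lhs j)) Z).
  rewrite pre => /andP[/eqP p0 /eqP eq_ij]; subst j.
  have X0 : X = [::] by apply/eqP; rewrite -size_eq0 p0.
  have EZ' : Z = lhs i by rewrite EX X0.
  have ER' : R = R'.
    by move: ER; rewrite EZ' => /(congr1 (drop (size (lhs i)))); rewrite !drop_size_cat.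
  by exists [::]; split => // w; rewrite EL' X0 ER' cats0 fcoef_nil addr0.
have [EZ ER'] := cat_split (esym ER) (ltnW lt_Z).
have pre : prefix Z (lhs j) by apply/prefixP; exists (drop (size Z) (lhs j)).
rewrite pre => ov.
exists (ctxC L R' (embC k (cert i j p))); split.
  by rewrite /lead_word ER'; apply: below_overlap_cert.
move=> w; rewrite ER' overlap_resolution // -/Z EL' (_ : take p (lhs i) = X) //.
by rewrite EX take_size_cat.
Qed.

Lemma lead_word_eq_resolution L i R L' j R' :
  (i < size rules)%N -> (j < size rules)%N -> lead_word L i R = lead_word L' j R' ->
  exists D, below (wcode (lead_word L i R)) D /\
    forall w, fcoef (ctx L (relk k i) R) w = fcoef (ctx L' (relk k j) R') w + fcoef (combo D) w.
Proof.
move=> lt_i lt_j E; have [le_L|lt_L] := leqP (size L) (size L').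
  exact: lead_word_eq_resolution_le.
have [D [bD ED]] := lead_word_eq_resolution_le lt_j lt_i (esym E) (ltnW lt_L).
exists (scaleC (-1) D); split; first by rewrite E; apply: below_scale.
by move=> w; rewrite ED fcoef_combo_scale; ring.
Qed.

Lemma below_split_lead n L0 i0 R0 C : (i0 < size rules)%N ->
  wcode (lead_word L0 i0 R0) = n -> below n.+1 C ->
  exists (s : k) D, below n D /\
    forall w, fcoef (combo C) w = s * fcoef (ctx L0 (relk k i0) R0) w + fcoef (combo D) w.
Proof.
move=> lt_i0 En; elim: C => [|[[[c L] i] R] C IH] bC.
  by exists 0, [::]; split => // w; rewrite mul0r fcoef_nil addr0.
have [|s [D [bD ED]]] := IH; first by move=> u u_C; apply: bC; rewrite inE u_C orbT.
have [lt_i] := bC _ (mem_head _ _); rewrite /inst_lead /= => lt_lead.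
have [lt_n|ge_n] := ltnP (wcode (lead_word L i R)) n.
  exists s, ((c, L, i, R) :: D); split.
    by move=> u; rewrite inE => /orP[/eqP -> //|/bD].
  by move=> w; rewrite !fcoef_combo_cons ED; ring.
have E : lead_word L i R = lead_word L0 i0 R0 by apply: wcode_inj; rewrite En; lia.
have [D' [bD' ED']] := lead_word_eq_resolution lt_i lt_i0 E.
exists (c + s), (scaleC c D' ++ D); split.
  by apply: below_cat => //; apply/below_scale; rewrite -En -E.
move=> w; rewrite fcoef_combo_cons fcoef_term ED' ED fcoef_combo_cat fcoef_combo_scale.
ring.
Qed.

Lemma combo_reduced_support_eq0 n C : below n C ->
  (forall w, ~~ reduced w -> fcoef (combo C) w = 0) -> forall w, fcoef (combo C) w = 0.
Proof.
elim: n C => [|n IH] C bC C0.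
  case: C bC C0 => [|t C] bC C0 w; first exact: fcoef_nil.
  by have [_] := bC t (mem_head _ _).
have [/hasP[[[[c L0] i0] R0] t_C /eqP En]|no_n] :=
  boolP (has (fun t => wcode (inst_lead t) == n) C).
  have [lt_i0 _] := bC _ t_C.
  have [s [D [bD ED]]] := below_split_lead lt_i0 En bC.
  have s0 : s = 0.
    have : ~~ reduced (lead_word L0 i0 R0) by apply/reducedPn; exists L0, i0, R0.
    move/C0; rewrite ED fcoef_relk_lead // (fcoef_combo_below bD) ?En //.
    by rewrite addr0 mulr1.
  have EC w : fcoef (combo C) w = fcoef (combo D) w by rewrite ED s0 mul0r add0r.
  by move=> w; rewrite EC; apply: (IH D bD) => w' /C0; rewrite EC.
apply: IH => // t t_C; have [lt_i lt_lead] := bC t t_C; split => //.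
have : wcode (inst_lead t) != n by apply: contraNneq no_n => E; apply/hasP; exists t; rewrite ?E.
lia.
Qed.

End Field.
End Ambiguities.
End Rewriting.

Definition gl2_rules : seq (word * ipoly) :=
  [:: ([:: gc; ga], [:: (1, [:: ga; gc])]);
      ([:: gd; gb], [:: (1, [:: gb; gd])]);
      ([:: gc; gb], [:: (1, [:: ga; gd]); (-1, [:: gdel])]);
      ([:: gd; ga], [:: (1, [:: gb; gc]); (1, [:: gdel])]);
      ([:: gdel; gdeli], [:: (1, [::])]);
      ([:: gdeli; gdel], [:: (1, [::])]);
      ([:: gb; gdeli; gc], [:: (1, [:: ga; gdeli; gd]); (-1, [::])]);
      ([:: gd; gdeli; ga], [:: (1, [:: gc; gdeli; gb]); (1, [::])]);
      ([:: gb; gdeli; ga], [:: (1, [:: ga; gdeli; gb])]);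
      ([:: gd; gdeli; gc], [:: (1, [:: gc; gdeli; gd])])]%R.

(* The overlap ambiguities are d[b]δ'c, d[b]δ'a, c[b]δ'c, c[b]δ'a, bδ'[c]a,
   bδ'[c]b, dδ'[c]a, dδ'[c]b, δ[δ']δ and δ'[δ]δ'; the last two need no
   further instance. *)
Definition gl2_cert (i j p : nat) : seq (inst int) :=
  match i, j, p with
  | 1, 6, 1 => [:: (1, [::], 3, [:: gdeli; gd]); (-1, [:: gb], 9, [::]); (1, [::], 4, [:: gd])]
  | 1, 8, 1 => [:: (1, [::], 3, [:: gdeli; gb]); (-1, [:: gb], 7, [::]); (1, [::], 4, [:: gb])]
  | 2, 6, 1 => [:: (1, [::], 0, [:: gdeli; gd]); (-1, [:: ga], 9, [::]); (1, [::], 4, [:: gc])]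
  | 2, 8, 1 => [:: (1, [::], 0, [:: gdeli; gb]); (-1, [:: ga], 7, [::]); (1, [::], 4, [:: ga])]
  | 6, 0, 2 => [:: (1, [::], 8, [:: gc]); (-1, [:: ga; gdeli], 3, [::]); (-1, [:: ga], 5, [::])]
  | 6, 2, 2 => [:: (1, [::], 8, [:: gd]); (-1, [:: ga; gdeli], 1, [::]); (-1, [:: gb], 5, [::])]
  | 9, 0, 2 => [:: (1, [::], 7, [:: gc]); (-1, [:: gc; gdeli], 3, [::]); (-1, [:: gc], 5, [::])]
  | 9, 2, 2 => [:: (1, [::], 7, [:: gd]); (-1, [:: gc; gdeli], 1, [::]); (-1, [:: gd], 5, [::])]
  | _, _, _ => [::]
  end%R%N.

Lemma gl2_rules_decreasing :
  all (fun r => all (fun u => wcode u < wcode r.1)%N (map snd r.2)) gl2_rules.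
Proof. by []. Qed.

Lemma gl2_ambiguities_resolved : ambiguities_resolved gl2_rules gl2_cert.
Proof. by vm_compute. Qed.

(* The relations of the statement are the rules up to sign. *)
Definition rel_sign (i : nat) : int := nth 1 [:: -1; -1; -1; 1; 1; 1; -1; 1; 1; -1] i.

Lemma fcoef_rels (k : fieldType) i w : (i < 10)%N ->
  fcoef (nth [::] (rels k) i) w = (rel_sign i)%:~R * fcoef (relk gl2_rules k i) w.
Proof.
move=> lt_i; rewrite fcoef_emb.
do 10 (case: i lt_i => [|i] lt_i;
  [rewrite /rels /fsub /fscale /fmon /= /fcoef !big_cons !big_nil /=;
   repeat case: eqP => _ /=; rewrite ?mulrzDr ?mulrNz ?mulr1z ?mulr0z; ring|]).
done.
Qed.

Lemma rel_sign_sqr (k : fieldType) i : (i < 10)%N -> ((rel_sign i)%:~R ^+ 2 : k) = 1.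
Proof. by move=> lt_i; rewrite -rmorphXn; do 10 (case: i lt_i => [|i] lt_i //). Qed.

Lemma fcoef_rels_term (k : fieldType) c L i R w : (i < 10)%N ->
  fcoef (fscale (c * (rel_sign i)%:~R)
           (fmul (fmul (fmon k L) (nth [::] (rels k) i)) (fmon k R))) w =
  fcoef (term gl2_rules (c, L, i, R)) w.
Proof.
move=> lt_i; rewrite fcoef_scale fcoef_fmul_mon fcoef_term.
have E : feq (nth [::] (rels k) i) (fscale (rel_sign i)%:~R (relk gl2_rules k i)).
  by move=> w'; rewrite fcoef_rels // fcoef_scale.
by rewrite (ctx_feq L R E) ctx_scale fcoef_scale mulrA -(mulrA c) -expr2 rel_sign_sqr // mulr1.
Qed.

Local Close Scope ring_scope.

(* g :: w begins with the left-hand side of a rule. *)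
Definition head_redex (g : gen) (w : word) : bool :=
  match g, w with
  | (gc | gd), (ga | gb) :: _ => true
  | (gb | gd), gdeli :: (ga | gc) :: _ => true
  | gdel, gdeli :: _ | gdeli, gdel :: _ => true
  | _, _ => false
  end.

Lemma reduced_cons g w :
  reduced gl2_rules (g :: w) = ~~ head_redex g w && reduced gl2_rules w.
Proof.
have -> : head_redex g w = has (fun i => prefix (lhs gl2_rules i) (g :: w)) (iota 0 10).
  case: g; case: w => [|h1 w]; try case: h1; try case: w => [|h2 w]; try case: h2;
    by rewrite //= !prefix0s.
by rewrite /reduced -negb_or -has_predU.
Qed.

Lemma ok_tail_head w x ps : ok_tail ((w, x) :: ps) -> exists h w', w = h :: w' /\ is_abcd h.
Proof.
by case: w => [|h w'] //= /and3P[]; rewrite /good_word /= => /andP[/andP[abcd_h _] _]; exists h, w'.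
Qed.

Lemma build_cons x0 w1 x1 ps : build x0 ((w1, x1) :: ps) = dpow x0 ++ w1 ++ build x1 ps.
Proof. by rewrite /build /= -!catA. Qed.

Lemma basis_cons_abcd g x0 ps : is_abcd g -> ok_tail ps ->
  ~~ head_redex g (build x0 ps) -> basis_word (g :: build x0 ps).
Proof.
move=> abcd_g ok_ps; case: x0 => [[|n]|n] no_redex.
- case: ps ok_ps no_redex => [|[w1 x1] ps] ok_ps no_redex.
    by exists 0, [:: ([:: g], 0%R)]; rewrite /= /good_word /= abcd_g.
  have [h [w1' [Ew1 abcd_h]]] := ok_tail_head ok_ps.
  exists 0, ((g :: w1, x1) :: ps); split; last by rewrite !build_cons.
  move: ok_ps no_redex; rewrite Ew1 build_cons /= /good_word /= abcd_g.
  case/and3P => /andP[/andP[-> ->] ->] -> -> no_redex; rewrite !andbT.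
  by clear Ew1; case: g abcd_g no_redex; case: h abcd_h.
- exists 0, (([:: g], Posz n.+1) :: ps); split; last by rewrite build_cons.
  by rewrite /= /good_word /= abcd_g ok_ps; case: ps {ok_ps no_redex} => [|[]].
- exists 0, (([:: g], Negz n) :: ps); split; last by rewrite build_cons.
  rewrite /= /good_word /= abcd_g ok_ps /= andbT.
  case: ps ok_ps no_redex => [|[w1 x1] ps] ok_ps //; case: n => [|n] //.
  have [h [w1' [-> abcd_h]]] := ok_tail_head ok_ps.
  by rewrite build_cons /=; case: g abcd_g; case: h abcd_h.
Qed.

Lemma basis_cons g w : basis_word w -> ~~ head_redex g w -> basis_word (g :: w).
Proof.
case=> x0 [ps [ok_ps ->]] no_redex.
case: g no_redex => no_redex; try exact: basis_cons_abcd.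
- by case: x0 no_redex => [n|[|n]] // _; exists (Posz n.+1), ps.
- by case: x0 no_redex => [[|n]|n] // _; [exists (Negz 0), ps | exists (Negz n.+1), ps].
Qed.

Lemma basis_uncons_abcd g w1 x1 ps : ok_tail ((g :: w1, x1) :: ps) ->
  basis_word (w1 ++ build x1 ps) /\ ~~ head_redex g (w1 ++ build x1 ps).
Proof.
move=> /= /and3P[/and3P[_ /andP[abcd_g abcd_w1] sorted_w1] sep ok_ps].
case: w1 abcd_w1 sorted_w1 sep => [|h w1] abcd_w1 sorted_w1 sep /=.
  split; first by exists x1, ps.
  clear abcd_w1 sorted_w1; case: x1 sep => [[|n]|[|n]] sep; rewrite /build /=;
    try by case: g abcd_g sep.
    by case: ps ok_ps sep => [|[w2 x2] ps] // _ _; case: g abcd_g.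
  case: ps ok_ps sep => [|[w2 x2] ps] ok_ps sep; first by case: g abcd_g.
  have [h [w2' [Ew2 abcd_h]]] := ok_tail_head ok_ps; subst w2; clear ok_ps.
  by rewrite /=; case: g abcd_g sep; case: h abcd_h.
move: abcd_w1 sorted_w1 => /andP[abcd_h abcd_w1] /andP[le_gh sorted_w1].
split; last by clear sep sorted_w1 abcd_w1; case: g abcd_g le_gh; case: h abcd_h.
exists 0, ((h :: w1, x1) :: ps); split; last by rewrite build_cons.
by rewrite /= /good_word /= abcd_h; apply/and3P; split => //; apply/andP.
Qed.

Lemma basis_uncons g w : basis_word (g :: w) -> basis_word w /\ ~~ head_redex g w.
Proof.
case=> x0 [ps [ok_ps E]]; case: x0 E => [[|n]|n] E.
- case: ps ok_ps E => [|[w1 x1] ps] ok_ps //; rewrite build_cons /=.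
  have [h [w1' [Ew1 _]]] := ok_tail_head ok_ps; rewrite Ew1 in ok_ps *.
  by case=> -> ->; apply: basis_uncons_abcd.
- case: E => -> ->; split; first by exists (Posz n), ps.
  case: n => [|n] //; case: ps ok_ps => [|[w1 x1] ps] ok_ps //.
  by have [h [w1' [-> abcd_h]]] := ok_tail_head ok_ps; case: h abcd_h.
- case: E => -> ->; split.
    by case: n => [|n]; [exists 0, ps | exists (Negz n), ps].
  case: n => [|n] //; case: ps ok_ps => [|[w1 x1] ps] ok_ps //.
  by have [h [w1' [-> abcd_h]]] := ok_tail_head ok_ps; case: h abcd_h.
Qed.

Lemma basis_wordP w : basis_word w <-> reduced gl2_rules w.
Proof.
elim: w => [|g w IH]; first by split => // _; exists 0, [::].
rewrite reduced_cons; split.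
  by case/basis_uncons => /IH -> ->.
by case/andP => no_redex /IH basis_w; apply: basis_cons.
Qed.

Local Open Scope ring_scope.

Section GL2.
Variable k : fieldType.

Lemma in_idealP p : in_ideal p <->
  exists2 C : seq (inst k), (forall t, t \in C -> (t.1.2 < 10)%N) & feq p (combo gl2_rules C).
Proof.
split=> [[S [S_rels E]]|[C C_ok E]].
  exists [seq (t.1.1.1 * (rel_sign (index t.1.2 (rels k)))%:~R, t.1.1.2, index t.1.2 (rels k), t.2)
           | t <- S].
    by move=> _ /mapP[t /S_rels rel_t ->]; rewrite -index_mem in rel_t.
  move=> w; rewrite E fcoef_flatten fcoef_combo !big_map !big_seq.
  apply: eq_bigr => -[[[c L] r] R] /S_rels /= rel_r.
  have lt_i : (index r (rels k) < 10)%N by rewrite -index_mem in rel_r.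
  by rewrite -fcoef_rels_term // nth_index // -mulrA -expr2 rel_sign_sqr // mulr1.
exists [seq (t.1.1.1 * (rel_sign t.1.2)%:~R, t.1.1.2, nth [::] (rels k) t.1.2, t.2) | t <- C].
split; first by move=> _ /mapP[t /C_ok lt_i ->]; apply: mem_nth.
move=> w; rewrite E fcoef_flatten fcoef_combo !big_map !big_seq.
by apply: eq_bigr => -[[[c L] i] R] /C_ok lt_i; rewrite fcoef_rels_term.
Qed.

Lemma gl2_spanning u : exists s : seq (k * word),
  (forall t, t \in s -> basis_word t.2) /\ in_ideal (fsub (fmon k u) s).
Proof.
have [s [C [s_red [C_ok E]]]] := normalizes_mon gl2_rules_decreasing (1 : k) u.
exists s; split; first by move=> t /s_red /basis_wordP.
by apply/in_idealP; exists C => // w; rewrite fcoef_cat fcoef_scale E; ring.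
Qed.

Lemma gl2_independence (s : seq (k * word)) : uniq (map snd s) ->
  (forall t, t \in s -> basis_word t.2) -> in_ideal s -> forall t, t \in s -> t.1 = 0.
Proof.
move=> uniq_s basis_s /in_idealP[C C_ok E] t t_s.
pose n := (\max_(x <- C) wcode (inst_lead gl2_rules x)).+1.
have below_C : below gl2_rules n C.
  move=> x x_C; split; first exact: C_ok.
  by rewrite ltnS (@leq_bigmax_seq _ C xpredT _ x x_C).
rewrite -(fcoef_uniq uniq_s t_s) E.
apply: (combo_reduced_support_eq0 gl2_rules_decreasing gl2_ambiguities_resolved below_C).
move=> w red_w; rewrite -E fcoef_eq0 // => x x_s.
by apply: contraNneq red_w => <-; apply/basis_wordP/basis_s.
Qed.

End GL2.

Theorem mainTheorem12 (k : fieldType) :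
  (forall u : word,
     exists s : seq (k * word),
       (forall t, t \in s -> basis_word t.2) /\
       in_ideal (fsub (fmon k u) s)) /\
  (forall s : seq (k * word),
     uniq (map snd s) ->
     (forall t, t \in s -> basis_word t.2) ->
     in_ideal s ->
     forall t, t \in s -> t.1 = 0).
Proof. by split; [apply: gl2_spanning | apply: gl2_independence]. Qed.
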